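(* Let $A$ be a finite-dimensional algebra over a field $k$ and let $F^\bullet \in \mathcal{L}_A$. Then for every $k\in\mathbb{Z}$ the cohomology module $\mathrm{H}^k(F^\bullet)$ lies in ${}^\perp\mathcal{P}_A$, i.e. $\operatorname{Hom}_A(\mathrm{H}^k(F^\bullet), Z)=0$ for every projective-injective right $A$-module $Z$.
   Context: Conventions: $k$ is a field, $A$ a finite-dimensional $k$-algebra without semisimple direct summands; $\operatorname{mod}A$ is the category of finitely generated right $A$-modules, $\operatorname{proj}A$ the full subcategory of projectives; $(-)^\ast:=\operatorname{Hom}_A(-,A)$. $\mathcal{P}_A$ is the full subcategory of projective-injective modules and ${}^\perp\mathcal{P}_A$ the full subcategory of $X\in\operatorname{mod}A$ with $\operatorname{Hom}_A(X,Z)=0$ for all $Z\in\mathcal{P}_A$. $\mathrm{K}(\operatorname{proj}A)$ denotes the unbounded homotopy category of complexes of finitely generated projective right $A$-modules, written as cochain complexes $F^\bullet=(F^k,d^k:F^k\to F^{k+1})$ with cohomology $\mathrm{H}^k(F^\bullet)=\operatorname{Ker}d^k/\operatorname{Im}d^{k-1}$. Applying $(-)^\ast$ componentwise yields a complex of projective left modules written as a chain complex $F^\ast_\bullet$ with $F^\ast_k:=(F^k)^\ast$ and differential $(d^k)^\ast:F^\ast_{k+1}\to F^\ast_k$; its homology is $\mathrm{H}_k(F^\ast_\bullet)=\operatorname{Ker}((d^{k-1})^\ast)/\operatorname{Im}((d^k)^\ast)$. Kato's category: $\mathcal{L}_A=\{F^\bullet\in\mathrm{K}(\operatorname{proj}A)\mid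 \mathrm{H}^k(F^\bullet)=0 \text{ for all } k<0,\ \mathrm{H}_k(F^\ast_\bullet)=0\text{ for all }k\ge 0\}$. *)

From HB Require Import structures.
From mathcomp Require Import all_boot all_order all_algebra falgebra.
Set Implicit Arguments. Unset Strict Implicit. Unset Printing Implicit Defensive.
Import GRing.Theory.
Local Open Scope ring_scope.

Section Modules.
Variables (k : fieldType) (A : falgType k).

(* A finitely generated right A-module = a finite-dimensional k-vector space
   with a k-bilinear, unital, associative right action of A. *)
Record rmod := RMod {
  rcar :> vectType k;
  ract : rcar -> A -> rcar;
  ract_linl : forall (a : A) (c : k) (x y : rcar),
      ract (c *: x + y) a = c *: ract x a + ract y a;
  ract_linr : forall (x : rcar) (c : k) (a b : A),
      ract x (c *: a + b) = c *: ract x a + ract x b;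
  ract1 : forall x : rcar, ract x 1 = x;
  ractM : forall (x : rcar) (a b : A), ract (ract x a) b = ract x (a * b)
}.

Definition is_hom (M N : rmod) (f : M -> N) : Prop :=
  (forall (c : k) (x y : M), f (c *: x + y) = c *: f x + f y) /\
  (forall (x : M) (a : A), f (ract x a) = ract (f x) a).

Lemma regmod_linl (a : A) (c : k) (x y : A) :
  (c *: x + y) * a = c *: (x * a) + y * a.
Proof. by rewrite mulrDl scalerAl. Qed.
Lemma regmod_linr (x : A) (c : k) (a b : A) :
  x * (c *: a + b) = c *: (x * a) + x * b.
Proof. by rewrite mulrDr scalerAr. Qed.
Lemma regmod_1 (x : A) : x * 1 = x. Proof. exact: mulr1. Qed.
Lemma regmod_M (x a b : A) : x * a * b = x * (a * b).
Proof. by rewrite mulrA. Qed.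

Definition regmod : rmod :=
  @RMod A (fun x a => x * a) regmod_linl regmod_linr regmod_1 regmod_M.

Definition projective (P : rmod) : Prop :=
  forall (M N : rmod) (g : M -> N) (h : P -> N),
    is_hom g -> (forall y : N, exists x : M, g x = y) -> is_hom h ->
    exists l : P -> M, is_hom l /\ (forall x, g (l x) = h x).

Definition injective_mod (Z : rmod) : Prop :=
  forall (M N : rmod) (i : M -> N) (h : M -> Z),
    is_hom i -> injective i -> is_hom h ->
    exists e : N -> Z, is_hom e /\ (forall x, e (i x) = h x).

Record pcomplex := PComplex {
  cobj : int -> rmod;
  cdif : forall i : int, cobj i -> cobj (i + 1);
  cdif_hom : forall i, is_hom (@cdif i);
  cdif2 : forall i (x : cobj i), cdif (cdif x) = 0;
  cobj_proj : forall i, projective (cobj i)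
}.

(* H^(i+1)(F) = 0, i.e. Ker d^(i+1) = Im d^i *)
Definition cohom_zero (F : pcomplex) (i : int) : Prop :=
  forall x : cobj F (i + 1), cdif x = 0 -> exists y : cobj F i, cdif y = x.

(* H_(i+1)(F^dual) = 0, i.e. Ker((d^i)^dual) = Im((d^(i+1))^dual) in
   Hom_A(F^(i+1), A): every A-linear phi : F^(i+1) -> A with phi o d^i = 0
   is of the form psi o d^(i+1) for some A-linear psi : F^(i+2) -> A. *)
Definition dual_hom_zero (F : pcomplex) (i : int) : Prop :=
  forall phi : cobj F (i + 1) -> regmod, is_hom phi ->
    (forall y : cobj F i, phi (cdif y) = 0) ->
    exists psi : cobj F (i + 1 + 1) -> regmod,
      is_hom psi /\ (forall x, phi x = psi (cdif x)).

(* Kato's category L_A (indexing k = i + 1 ranges over all integers) *)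
Definition in_KatoL (F : pcomplex) : Prop :=
  (forall i : int, i + 1 < 0 -> cohom_zero F i) /\
  (forall i : int, 0 <= i + 1 -> dual_hom_zero F i).

(* Hom_A(H^(i+1)(F), Z) = 0, where H^(i+1)(F) = Ker d^(i+1) / Im d^i:
   an A-linear map Ker d^(i+1) -> Z (given by its values on the kernel)
   vanishing on Im d^i is zero. *)
Definition hom_cohom_zero (F : pcomplex) (i : int) (Z : rmod) : Prop :=
  forall g : cobj F (i + 1) -> Z,
    (forall (c : k) (x y : cobj F (i + 1)), cdif x = 0 -> cdif y = 0 ->
        g (c *: x + y) = c *: g x + g y) ->
    (forall (x : cobj F (i + 1)) (a : A), cdif x = 0 ->
        g (ract x a) = ract (g x) a) ->
    (forall y : cobj F i, g (cdif y) = 0) ->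
    forall x : cobj F (i + 1), cdif x = 0 -> g x = 0.

End Modules.

(* Let F be in L_A, Z projective-injective and g : H^(i+1)(F) -> Z, given as an
   A-linear map on the cycles Ker d^(i+1) vanishing on the boundaries Im d^i.
   - If i + 1 < 0 the complex is exact there, so every cycle is a boundary.
   - Otherwise, since Z is injective, g extends along Ker d^(i+1) -> F^(i+1)
     to an A-linear e : F^(i+1) -> Z, still vanishing on Im d^i.  Since Z is
     projective it is a retract of a free module A^n, so e is determined by the
     n coordinate maps F^(i+1) -> A of l o e (l the section).  Each of them
     vanishes on Im d^i, hence factors through d^(i+1) by the dual exactness
     condition of L_A, hence vanishes on Ker d^(i+1).  So e, and thus g, is
     zero on the cycles. *)
From HB Require Import structures.
From mathcomp Require Import all_boot all_order all_algebra falgebra.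
Import GRing.Theory.
Local Open Scope ring_scope.

Section KatoCohomology.
Variables (k : fieldType) (A : falgType k).

Lemma eq_double0 (V : zmodType) (v : V) : v = v + v -> v = 0.
Proof. by move=> vvv; apply: (@addrI _ v); rewrite addr0 -vvv. Qed.

Lemma hom0 {M N : rmod A} {f : M -> N} : is_hom f -> f 0 = 0.
Proof.
by case=> flin _; apply: eq_double0; rewrite -{2}[f 0]scale1r -flin scale1r addr0.
Qed.

Lemma hom_comp {M N P : rmod A} {f : M -> N} {h : N -> P} :
  is_hom f -> is_hom h -> is_hom (h \o f).
Proof.
move=> [flin fA] [hlin hA]; split=> [c x y | x a] /=; first by rewrite flin hlin.
by rewrite fA hA.
Qed.

Lemma ract0l (M : rmod A) (a : A) : ract (0 : M) a = 0.
Proof.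
by apply: eq_double0; rewrite -{2}[ract 0 a]scale1r -ract_linl scale1r addr0.
Qed.

Lemma ract0r (M : rmod A) (x : M) : ract x 0 = 0.
Proof.
by apply: eq_double0; rewrite -{2}[ract x 0]scale1r -ract_linr scale1r addr0.
Qed.

Lemma ractDl (M : rmod A) (x y : M) (a : A) : ract (x + y) a = ract x a + ract y a.
Proof. by have := ract_linl a 1 x y; rewrite !scale1r. Qed.

Lemma ractZr (M : rmod A) (x : M) (c : k) (a : A) : ract x (c *: a) = c *: ract x a.
Proof. by have := ract_linr x c a 0; rewrite !addr0 ract0r addr0. Qed.

Lemma ract_sum (M : rmod A) (I : Type) (r : seq I) (G : I -> M) (a : A) :
  ract (\sum_(j <- r) G j) a = \sum_(j <- r) ract (G j) a.
Proof.
elim: r => [|j r IH]; first by rewrite !big_nil ract0l.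
by rewrite !big_cons ractDl IH.
Qed.

Section FreeModule.
Variable n : nat.

Definition freeact (f : {ffun 'I_n -> A}) (a : A) : {ffun 'I_n -> A} :=
  [ffun j => f j * a].

Lemma freeact_linl (a : A) (c : k) (x y : {ffun 'I_n -> A}) :
  freeact (c *: x + y) a = c *: freeact x a + freeact y a.
Proof. by apply/ffunP => j; rewrite !ffunE mulrDl scalerAl. Qed.

Lemma freeact_linr (x : {ffun 'I_n -> A}) (c : k) (a b : A) :
  freeact x (c *: a + b) = c *: freeact x a + freeact x b.
Proof. by apply/ffunP => j; rewrite !ffunE mulrDr scalerAr. Qed.

Lemma freeact1 (x : {ffun 'I_n -> A}) : freeact x 1 = x.
Proof. by apply/ffunP => j; rewrite ffunE mulr1. Qed.

Lemma freeactM (x : {ffun 'I_n -> A}) (a b : A) :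
  freeact (freeact x a) b = freeact x (a * b).
Proof. by apply/ffunP => j; rewrite !ffunE mulrA. Qed.

Definition freemod : rmod A :=
  @RMod _ _ {ffun 'I_n -> A} freeact freeact_linl freeact_linr freeact1 freeactM.

Lemma coord_hom (j : 'I_n) : is_hom (fun x : freemod => (x j : regmod A)).
Proof. by split=> [c x y | x a] /=; rewrite !ffunE. Qed.

End FreeModule.

(* Every module is a quotient of a free module: send the j-th basis vector of
   A^n to the j-th vector of a k-basis of M. *)
Lemma free_cover (M : rmod A) :
  exists n (s : freemod n -> M), is_hom s /\ forall z, exists x, s x = z.
Proof.
pose n := \dim (fullv : {vspace M}).
pose b := vbasis (fullv : {vspace M}).
pose s (x : freemod n) : M := \sum_(j < n) ract b`_j (x j).
exists _, s; split; first split.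
- move=> c x y; rewrite /s scaler_sumr -big_split; apply: eq_bigr => j _ /=.
  by rewrite !ffunE ract_linr.
- move=> x a; rewrite /s ract_sum; apply: eq_bigr => j _ /=.
  by rewrite ffunE ractM.
- move=> z; exists [ffun j => coord b j z *: (1 : A)].
  rewrite /s {2}(coord_vbasis (memvf z)); apply: eq_bigr => j _.
  by rewrite ffunE ractZr ract1.
Qed.

Lemma projective_retract_free {Z : rmod A} : projective Z ->
  exists n (s : freemod n -> Z) (l : Z -> freemod n),
    [/\ is_hom s, is_hom l & forall z, s (l z) = z].
Proof.
move=> projZ; have [n [s [hs ssurj]]] := free_cover Z.
have id_hom : is_hom (@id Z) by [].
have [l [hl sl]] := projZ _ _ s id hs ssurj id_hom.
by exists n, s, l.
Qed.

Section Kernel.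
Variables (M N : rmod A) (f : M -> N) (hf : is_hom f).

Let f_linear : linear f. Proof. by move=> c x y; exact: (proj1 hf). Qed.
Let fL : {linear M -> N} := HB.pack f (GRing.isLinear.Build _ _ _ _ f f_linear).

Definition kerspace : {vspace M} := lker (linfun fL).

Lemma mem_kerspace (x : M) : (x \in kerspace) = (f x == 0).
Proof. by rewrite memv_ker lfunE. Qed.

Lemma kerspaceP (u : subvs_of kerspace) : f (vsval u) = 0.
Proof. by apply/eqP; rewrite -mem_kerspace subvsP. Qed.

Lemma ker_ract_in (u : subvs_of kerspace) (a : A) : ract (vsval u) a \in kerspace.
Proof. by rewrite mem_kerspace (proj2 hf) kerspaceP ract0l. Qed.

Definition kerract (u : subvs_of kerspace) (a : A) : subvs_of kerspace :=
  vsproj kerspace (ract (vsval u) a).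

Lemma kerractE u a : vsval (kerract u a) = ract (vsval u) a.
Proof. exact: vsprojK (ker_ract_in u a). Qed.

Lemma kerract_linl a c (x y : subvs_of kerspace) :
  kerract (c *: x + y) a = c *: kerract x a + kerract y a.
Proof. by apply: subvs_inj; rewrite linearP /= !kerractE linearP ract_linl. Qed.

Lemma kerract_linr (x : subvs_of kerspace) c (a b : A) :
  kerract x (c *: a + b) = c *: kerract x a + kerract x b.
Proof. by apply: subvs_inj; rewrite linearP /= !kerractE ract_linr. Qed.

Lemma kerract1 (x : subvs_of kerspace) : kerract x 1 = x.
Proof. by apply: subvs_inj; rewrite kerractE ract1. Qed.

Lemma kerractM (x : subvs_of kerspace) a b :
  kerract (kerract x a) b = kerract x (a * b).
Proof. by apply: subvs_inj; rewrite !kerractE ractM. Qed.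

Definition kermod : rmod A :=
  @RMod _ _ (subvs_of kerspace) kerract kerract_linl kerract_linr kerract1 kerractM.

Lemma ker_incl_hom : is_hom (vsval : kermod -> M).
Proof. by split=> [c x y | x a]; rewrite /= ?kerractE // linearP. Qed.

Lemma extend_from_kernel (Z : rmod A) (g : M -> Z) : injective_mod Z ->
  (forall c x y, f x = 0 -> f y = 0 -> g (c *: x + y) = c *: g x + g y) ->
  (forall x a, f x = 0 -> g (ract x a) = ract (g x) a) ->
  exists e : M -> Z, is_hom e /\ forall x, f x = 0 -> e x = g x.
Proof.
move=> injZ glin gA.
have hgu : is_hom (fun u : kermod => g (vsval u)).
  split=> [c x y | x a]; first by rewrite linearP glin ?kerspaceP.
  by rewrite /= kerractE gA ?kerspaceP.
have [e [he eg]] := injZ _ _ _ _ ker_incl_hom (@subvs_inj _ _ _) hgu.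
exists e; split=> // x fx0.
have xK : x \in kerspace by rewrite mem_kerspace fx0.
by have := eg (vsproj kerspace x); rewrite /= vsprojK.
Qed.

End Kernel.

Lemma dual_exact_kills_cycles (F : pcomplex A) (i : int) (Z : rmod A)
    (e : cobj F (i + 1) -> Z) :
  dual_hom_zero F i -> projective Z -> is_hom e -> (forall y, e (cdif y) = 0) ->
  forall x, cdif x = 0 -> e x = 0.
Proof.
move=> dualF projZ he e_bd x dx.
have [n [s [l [hs hl sl]]]] := projective_retract_free projZ.
suff lex0 : l (e x) = 0 by rewrite -[e x]sl lex0 (hom0 hs).
apply/ffunP => j; rewrite ffunE.
pose phi := (fun y : freemod n => (y j : regmod A)) \o (l \o e).
have hphi : is_hom phi := hom_comp (hom_comp he hl) (@coord_hom n j).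
have phi_bd y : phi (cdif y) = 0 by rewrite /phi /= e_bd (hom0 hl) ffunE.
have [psi [hpsi Epsi]] := dualF phi hphi phi_bd.
by have := Epsi x; rewrite dx (hom0 hpsi).
Qed.

End KatoCohomology.
Arguments extend_from_kernel {k A M N f} hf {Z g}.
Arguments dual_exact_kills_cycles {k A F i Z e}.

Theorem mainTheorem1 (k : fieldType) (A : falgType k) (F : pcomplex A) :
  in_KatoL F ->
  forall (i : int) (Z : rmod A), projective Z -> injective_mod Z ->
    hom_cohom_zero F i Z.
Proof.
move=> [exactF dualF] i Z projZ injZ g glin gA g_bd x dx.
case: (Order.TotalTheory.ltP (i + 1) 0) => hi.
  by have [y <-] := exactF i hi x dx; exact: g_bd.
have [e [he eg]] := extend_from_kernel (cdif_hom F (i + 1)) injZ glin gA.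
rewrite -eg //; apply: (dual_exact_kills_cycles (dualF i hi) projZ he) => // y.
by rewrite eg ?cdif2.
Qed.
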